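(* Let $\mathcal K$ be a compact subset of $\mathcal L_{\mathbb C}$. There are constants $r_0>0$ and $C<\infty$ such that for any $x\in\mathbf S^3$, $L\in\mathcal K$ and $0<\delta\le r\le r_0$, \[\eta_L(A(x,r,\delta))\le C\delta^{1/2},\qquad\text{where }A(x,r,\delta)=\{y\in\mathbf S^3:r\le d(x,y)\le r+\delta\}.\]
   Context: On $\mathbb{C}^3$: $u\cdot v=\sum u_i\bar v_i$, $\|u\|=\sqrt{u\cdot u}$, $\langle u,v\rangle=u_0\bar v_0-u_1\bar v_1-u_2\bar v_2$, $q(u)=\langle u,u\rangle$, $\|u\wedge v\|^2=\|u\|^2\|v\|^2-|u\cdot v|^2$. $\mathbf S^3=\{u\in\mathbb P^2_{\mathbb C}:q(u)=0\}$ with visual metric $d(u,v)=\sqrt{|\langle u,v\rangle|/(\|u\|\|v\|)}$. $\mathcal L_{\mathbb C}=\{w\in\mathbb P^2_{\mathbb C}:q(w)<0\}$ with metric $d_E(u,v)=\|u\wedge v\|/(\|u\|\|v\|)$; $w$ is identified with the chain $L_w=\{u\in\mathbf S^3:\langle u,w\rangle=0\}$. For a chain $L$, $\eta_L$ is the $2$-dimensional Hausdorff measure on $L$ with respect to $d$. *)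

From HB Require Import structures.
From mathcomp Require Import all_boot all_order all_algebra.
From mathcomp Require Import all_classical all_reals all_analysis.
From mathcomp Require Import complex.

Set Implicit Arguments.
Unset Strict Implicit.
Unset Printing Implicit Defensive.

Import Order.TTheory GRing.Theory Num.Theory.
Import numFieldNormedType.Exports.
Local Open Scope classical_set_scope.
Local Open Scope ring_scope.

(* Points of C^3 are triples (u0, u1, u2).  Points of P^2_C are represented
   by nonzero vectors; every quantity below is invariant under scaling. *)
Definition C3 (R : realType) := (R[i] * R[i] * R[i])%type.

Section Defs.
Variable R : realType.
Implicit Types u v w : C3 R.

Definition cabs (z : R[i]) : R := Num.sqrt (complex.Re z ^+ 2 + complex.Im z ^+ 2).

Definition c0 u : R[i] := u.1.1.
Definition c1 u : R[i] := u.1.2.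
Definition c2 u : R[i] := u.2.

Definition C3_zero : C3 R := (0, 0, 0).

Definition edot u v : R[i] :=
  (c0 u * (c0 v)^* + c1 u * (c1 v)^* + c2 u * (c2 v)^*)%C.
Definition enorm u : R :=
  Num.sqrt (cabs (c0 u) ^+ 2 + cabs (c1 u) ^+ 2 + cabs (c2 u) ^+ 2).
Definition herm u v : R[i] :=
  (c0 u * (c0 v)^* - c1 u * (c1 v)^* - c2 u * (c2 v)^*)%C.
Definition qform u : R := complex.Re (herm u u).

Definition S3 : set (C3 R) := [set u | u <> C3_zero /\ qform u = 0].

Definition dvis u v : R := Num.sqrt (cabs (herm u v) / (enorm u * enorm v)).

Definition chain w : set (C3 R) := [set u | S3 u /\ herm u w = 0].

(* diameter w.r.t. d (diam of the empty set is 0) *)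
Definition ddiam (A : set (C3 R)) : \bar R :=
  ereal_sup ([set 0%E] `|` [set (dvis x y)%:E | x in A & y in A]).

Definition haus2_approx (delta : R) (A : set (C3 R)) : \bar R :=
  ereal_inf [set (\sum_(0 <= i <oo) (ddiam (F i) * ddiam (F i)))%E |
              F in [set F : nat -> set (C3 R) |
                     A `<=` \bigcup_i F i /\ forall i, (ddiam (F i) <= delta%:E)%E]].

Definition haus2 (A : set (C3 R)) : \bar R :=
  ereal_sup [set haus2_approx delta A | delta in [set delta : R | 0 < delta]].

Definition eta_L (w : C3 R) (A : set (C3 R)) : \bar R := haus2 (chain w `&` A).

Definition annulus x (r delta : R) : set (C3 R) :=
  [set y | S3 y /\ r <= dvis x y <= r + delta].

(* C^3 identified with R^6 (for its topology) *)
Definition realify u : (R * R) * (R * R) * (R * R) :=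
  ((complex.Re (c0 u), complex.Im (c0 u)), (complex.Re (c1 u), complex.Im (c1 u)), (complex.Re (c2 u), complex.Im (c2 u))).

End Defs.

(* On a chain [L_w] the visual metric is that of a circle: there are a unit
   complex parameter [zeta] on [L_w] and, for each [x] in [S^3], complex
   numbers [p], [q] with [d(x,y)^2 = |p - q zeta(y)|] for [y] in [L_w], while
   [d(y,y')^2 <= |zeta(y) - zeta(y')| / 2].  Since
   [|p - q zeta|^2 = |p|^2 + |q|^2 - 2 Re (p^* q zeta)], the annulus condition
   [r <= d(x,y) <= r + delta] confines [Re (p^* q zeta(y))] to an interval of
   length [O(delta)], and [|p^* q|] is bounded below when [r + delta] is small.
   So, after rotation, the annulus becomes an arc of the unit circle inside a
   vertical strip of width [L = O(delta)].  On each octant of the circle one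
   coordinate dominates the other and oscillates by at most [sqrt (2 L)];
   slicing along it covers the arc by sets of arbitrarily small diameter whose
   squared diameters sum to [O(sqrt L)].  Compactness of [K] makes the
   constants uniform. *)

From mathcomp Require Import all_boot all_order all_algebra.
From mathcomp Require Import all_classical all_reals all_analysis.
From mathcomp Require Import complex.
From mathcomp Require Import ring lra.

Set Implicit Arguments.
Unset Strict Implicit.
Unset Printing Implicit Defensive.

Import Order.TTheory GRing.Theory Num.Theory.
Import numFieldNormedType.Exports ComplexField.Normc.
Local Open Scope classical_set_scope.
Local Open Scope ring_scope.
(* complex_scope is not opened, so that [z^*] is the [Num.conj] of ring_scope,
   the form produced by the [rmorph] lemmas. *)
Local Notation "x %:C" := (real_complex _ x).

Section ComplexModulus.
Variable R : realType.
Implicit Types (x : R) (z u : R[i]).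

Lemma conj_realC x : x%:C^* = x%:C. Proof. exact: conjc_real. Qed.

Lemma cabsE z : cabs z = normc z. Proof. by case: z. Qed.

Lemma cabs_ge0 z : 0 <= cabs z. Proof. exact: sqrtr_ge0. Qed.

Lemma cabs_sqr z : cabs z ^+ 2 = complex.Re z ^+ 2 + complex.Im z ^+ 2.
Proof. by rewrite sqr_sqrtr // addr_ge0 // sqr_ge0. Qed.

Lemma cabsM z u : cabs (z * u) = cabs z * cabs u.
Proof. by rewrite !cabsE normcM. Qed.

Lemma cabsV z : cabs z^-1 = (cabs z)^-1.
Proof. by rewrite !cabsE normcV. Qed.

Lemma cabsJ z : cabs z^* = cabs z.
Proof. by case: z => a b; rewrite /cabs /= sqrrN. Qed.

Lemma cabsR x : cabs x%:C = `|x|.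
Proof. by rewrite /cabs /= expr0n addr0 sqrtr_sqr. Qed.

Lemma cabs_eq0 z : (cabs z == 0) = (z == 0).
Proof.
apply/eqP/eqP => [|->]; first by rewrite cabsE; apply: eq0_normc.
by rewrite cabsR normr0.
Qed.

Lemma cabs_gt0 z : (0 < cabs z) = (z != 0).
Proof. by rewrite lt_def cabs_eq0 cabs_ge0 andbT. Qed.

Lemma cabsD z u : cabs (z + u) <= cabs z + cabs u.
Proof. by rewrite !cabsE le_normcD. Qed.

Lemma cabsB z u : cabs z - cabs u <= cabs (z - u).
Proof. by have := cabsD (z - u) u; rewrite subrK lerBlDr. Qed.

Lemma mulcJ z : z * z^* = (cabs z ^+ 2)%:C.
Proof.
rewrite cabs_sqr; case: z => a b; apply/eqP; rewrite eq_complex /=.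
by apply/andP; split; apply/eqP; ring.
Qed.

Lemma cabs_le_Re_Im z : cabs z <= `|complex.Re z| + `|complex.Im z|.
Proof.
rewrite -ler_sqr ?nnegrE ?cabs_ge0 ?addr_ge0 // cabs_sqr.
rewrite -[complex.Re z ^+ 2]real_normK ?num_real //.
rewrite -[complex.Im z ^+ 2]real_normK ?num_real //.
have := mulr_ge0 (normr_ge0 (complex.Re z)) (normr_ge0 (complex.Im z)); nra.
Qed.

Lemma cabs_unit_Re_Im z : cabs z = 1 -> complex.Re z ^+ 2 + complex.Im z ^+ 2 = 1.
Proof. by rewrite -cabs_sqr => ->; rewrite expr1n. Qed.

Lemma Re_realC_mul x z : complex.Re (x%:C * z) = x * complex.Re z.
Proof. by case: z => a b /=; rewrite mul0r subr0. Qed.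

Lemma Re_sub z u : complex.Re (z - u) = complex.Re z - complex.Re u.
Proof. by case: z; case: u. Qed.

Lemma Im_sub z u : complex.Im (z - u) = complex.Im z - complex.Im u.
Proof. by case: z; case: u. Qed.

End ComplexModulus.

Section Coverings.
Variable R : realType.
Implicit Types (A B S : set (C3 R)) (eta l s t : R).

Definition coverable eta A s :=
  exists n (F : nat -> set (C3 R)) (D : nat -> R),
  [/\ forall y, A y -> exists2 i, (i < n)%N & F i y,
      forall i y y', F i y -> F i y' -> dvis y y' <= D i,
      forall i, 0 <= D i <= eta &
      \sum_(0 <= i < n) D i ^+ 2 <= s].

Lemma ddiam_ge0_le (F : set (C3 R)) (D : R) : 0 <= D ->
  (forall y y', F y -> F y' -> dvis y y' <= D) -> (0 <= ddiam F <= D%:E)%E.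
Proof.
move=> D0 hF; apply/andP; split; first by apply: ereal_sup_ubound; left.
apply: ge_ereal_sup => _ [->|[y Fy [y' Fy' <-]]]; rewrite lee_fin //.
exact: hF.
Qed.

Lemma coverable_haus2_approx eta A s :
  coverable eta A s -> (haus2_approx eta A <= s%:E)%E.
Proof.
move=> [n [F [D [covF diamF D_ge0_le sumD]]]].
pose G i := if (i < n)%N then F i else set0.
pose E i := if (i < n)%N then D i else 0.
have diamG i : (0 <= ddiam (G i) <= (E i)%:E)%E.
  rewrite /G /E; case: (i < n)%N; last exact: ddiam_ge0_le.
  by apply: ddiam_ge0_le; [case/andP: (D_ge0_le i) | exact: diamF].
have E_le i : E i <= eta.
  rewrite /E; case: (i < n)%N; first by case/andP: (D_ge0_le i).
  by case/andP: (D_ge0_le 0%N); apply: le_trans.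
apply: (@le_trans _ _ (\sum_(0 <= i <oo) (ddiam (G i) * ddiam (G i)))%E).
  apply: ereal_inf_lbound; exists G => //; split.
    by move=> y /covF [i ilt Fiy]; exists i => //; rewrite /G ilt.
  by move=> i; case/andP: (diamG i) => _ /le_trans; apply; rewrite lee_fin.
have diam_sqr_ge0 i : (0 <= ddiam (G i) * ddiam (G i))%E.
  by case/andP: (diamG i) => h _; apply: mule_ge0.
rewrite (nneseries_split 0 n) // (@eseries0 _ _ (0 + n)%N); last first.
  move=> i ni _; have /andP [G0 G_le0] := diamG i.
  rewrite /E ltnNge ni /= in G_le0.
  have -> : ddiam (G i) = 0%E by apply/eqP; rewrite eq_le G0 G_le0.
  by rewrite mule0.
rewrite adde0 add0n; apply: (@le_trans _ _ (\sum_(0 <= i < n) (D i ^+ 2)%:E)%E).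
  rewrite big_nat_cond [leRHS]big_nat_cond; apply: lee_sum => i.
  case/andP => /andP [_ ilt] _; case/andP: (diamG i); rewrite /E ilt => G0 GD.
  by rewrite expr2 EFinM; apply: lee_pmul.
by rewrite sumEFin lee_fin.
Qed.

Lemma coverable_subset eta A B s :
  A `<=` B -> coverable eta B s -> coverable eta A s.
Proof.
move=> AB [n [F [D [covF diamF DF sF]]]]; exists n, F, D; split => //.
by move=> y /AB /covF.
Qed.

Lemma coverable_setU eta A B s t :
  coverable eta A s -> coverable eta B t -> coverable eta (A `|` B) (s + t).
Proof.
move=> [n [F [D [covF diamF DF sF]]]] [m [G [E [covG diamG EG sG]]]].
exists (n + m)%N, (fun i => if (i < n)%N then F i else G (i - n)%N).
exists (fun i => if (i < n)%N then D i else E (i - n)%N); split.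
- move=> y [/covF [i ilt Fy]|/covG [i ilt Gy]].
    by exists i; [apply: ltn_addr | rewrite ilt].
  by exists (n + i)%N; rewrite ?ltn_add2l // ltnNge leq_addr /= addKn.
- by move=> i y y'; case: ifP => _; [apply: diamF | apply: diamG].
- by move=> i; case: ifP.
rewrite (@big_cat_nat _ _ _ n) //= ?leq_addr //; apply: lerD.
  by rewrite (eq_big_nat _ _ (F2 := fun i => D i ^+ 2)) // => i /andP [_ ->].
rewrite -{1}[n]add0n big_addn addKn.
by rewrite (eq_big_nat _ _ (F2 := fun i => E i ^+ 2)) // => i _; rewrite ltnNge leq_addl addnK.
Qed.

Lemma exists_slice (n : nat) (h v : R) : 0 <= h -> 0 <= v <= n.+1%:R * h ->
  exists2 k, (k <= n)%N & k%:R * h <= v <= k.+1%:R * h.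
Proof.
move=> h0; elim: n => [|n IHn] /andP [v0 vle]; first by exists 0%N; rewrite ?mul0r ?v0.
have [vle'|vgt] := leP v (n.+1%:R * h); last by exists n.+1; rewrite ?(ltW vgt).
by case: IHn => [|k kn hk]; [rewrite v0 | exists k; rewrite // ltnW].
Qed.

(* The slices are level sets of [f] of width [h = 2 l / n]: each has
   [d]-diameter at most [sqrt h], and [n] of them have total [n h = 2 l]. *)
Lemma coverable_slices eta l S (f : C3 R -> R) : 0 < eta -> 0 <= l ->
  (forall y y', S y -> S y' -> dvis y y' ^+ 2 <= `|f y - f y'|) ->
  (forall y y', S y -> S y' -> `|f y - f y'| <= l) ->
  coverable eta S (2 * l).
Proof.
move=> eta0 l0 d_le osc_f.
have [[y0 Sy0]|S0] := pselect (exists y, S y); last first.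
  exists 0%N, (fun _ => set0), (fun _ => 0); split => //.
  - by move=> y Sy; exfalso; apply: S0; exists y.
  - by move=> _; rewrite lexx ltW.
  - by rewrite big_geq // mulr_ge0.
pose n := (Num.Def.archi_bound (2 * l / eta ^+ 2)).+1.
have n_gt0 : 0 < n%:R :> R by rewrite ltr0n.
pose h := 2 * l / n%:R.
have h0 : 0 <= h by rewrite divr_ge0 ?mulr_ge0 // ltW.
have nh : n%:R * h = 2 * l by rewrite mulrC divfK // gt_eqF.
have h_le : h <= eta ^+ 2.
  have q0 : 0 <= 2 * l / eta ^+ 2 by rewrite divr_ge0 ?sqr_ge0 // mulr_ge0.
  have /ltW q_le : 2 * l / eta ^+ 2 < n%:R.
    by apply: lt_le_trans (archi_boundP q0) _; rewrite ler_nat.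
  by rewrite /h ler_pdivrMr // [_ * n%:R]mulrC -ler_pdivrMr ?exprn_gt0.
exists n, (fun k => [set y | S y /\ f y0 - l + k%:R * h <= f y <= f y0 - l + k.+1%:R * h]).
exists (fun _ => Num.sqrt h); split.
- move=> y Sy; have [k kn hk] : exists2 k, (k <= n.-1)%N &
      k%:R * h <= f y - (f y0 - l) <= k.+1%:R * h.
    apply: exists_slice => //; rewrite prednK // nh.
    by move: (osc_f _ _ Sy Sy0); rewrite ler_norml => /andP [? ?]; apply/andP; split; lra.
  by exists k; [rewrite -ltnS prednK in kn | split => //; move: hk => /andP [? ?]; apply/andP; split; lra].
- move=> k y y' [Sy /andP [y_ge y_le]] [Sy' /andP [y'_ge y'_le]].
  rewrite -(ger0_norm (sqrtr_ge0 _ : 0 <= dvis y y')) -sqrtr_sqr; apply: ler_wsqrtr.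
  apply: le_trans (d_le _ _ Sy Sy') _; rewrite mulrSr in y_le y'_le.
  by rewrite ler_norml; apply/andP; split; lra.
- move=> _; rewrite sqrtr_ge0 -(ger0_norm (ltW eta0)) -sqrtr_sqr.
  exact: ler_wsqrtr.
by rewrite sumr_const_nat subn0 sqr_sqrtr // -nh mulr_natl.
Qed.

End Coverings.

Section UnitCircle.
Variable R : realType.
Implicit Types a b x y : R.

Lemma sqr_le_norm x y : (x ^+ 2 <= y ^+ 2) = (`|x| <= `|y|).
Proof.
by rewrite -[x ^+ 2]real_normK ?num_real // -[y ^+ 2]real_normK ?num_real // ler_sqr ?nnegrE.
Qed.

Lemma same_sign_mulr_ge0 x y : (0 <= x) = (0 <= y) -> 0 <= x * y.
Proof.
case: (lerP 0 x) => hx; case: (lerP 0 y) => hy // _; first exact: mulr_ge0.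
exact: mulr_le0 (ltW hx) (ltW hy).
Qed.

Lemma unit_circle_norm_le1 a b : a ^+ 2 + b ^+ 2 = 1 -> `|a| <= 1.
Proof.
by move=> e; rewrite -(normr1 R) -sqr_le_norm expr1n -e; have := sqr_ge0 b; lra.
Qed.

Lemma unit_circle_sub_mulr a b (a' b' : R) :
  a ^+ 2 + b ^+ 2 = 1 -> a' ^+ 2 + b' ^+ 2 = 1 ->
  `|b - b'| * `|b + b'| = `|a - a'| * `|a + a'|.
Proof.
move=> e e'; rewrite -!normrM -[RHS]normrN; congr `|_|.
have -> : (b - b') * (b + b') = b ^+ 2 - b' ^+ 2 by ring.
have -> : - ((a - a') * (a + a')) = a' ^+ 2 - a ^+ 2 by ring.
lra.
Qed.

Lemma unit_circle_steep a b (a' b' : R) :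
  a ^+ 2 + b ^+ 2 = 1 -> a' ^+ 2 + b' ^+ 2 = 1 ->
  `|a| <= `|b| -> `|a'| <= `|b'| -> 0 <= b * b' -> `|b - b'| <= `|a - a'|.
Proof.
move=> e e'; rewrite -2!sqr_le_norm => ab ab' bb'.
have mul_le : a * a' <= b * b'.
  apply: le_trans (ler_norm _) _; rewrite -(ger0_norm bb') !normrM.
  by apply: ler_pM; rewrite ?normr_ge0 // -sqr_le_norm.
have bb_gt0 : 0 < `|b + b'|.
  rewrite normr_gt0; apply/eqP => /(congr1 (fun x => x ^+ 2)); rewrite expr0n /=.
  lra.
have aa_le : `|a + a'| <= `|b + b'| by rewrite -sqr_le_norm; lra.
rewrite -(ler_pM2r bb_gt0) /= (unit_circle_sub_mulr e e').
by apply: ler_wpM2l.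
Qed.

Lemma unit_circle_sqr_sub_le a b (a' b' : R) :
  a ^+ 2 + b ^+ 2 = 1 -> a' ^+ 2 + b' ^+ 2 = 1 ->
  0 <= b * b' -> (b - b') ^+ 2 <= 2 * `|a - a'|.
Proof.
move=> e e' bb'; rewrite -real_normK ?num_real //.
have b_le : `|b - b'| <= `|b + b'| by rewrite -sqr_le_norm; lra.
have a_le : `|a + a'| <= 2.
  apply: le_trans (ler_normD _ _) _.
  by have := unit_circle_norm_le1 e; have := unit_circle_norm_le1 e'; lra.
apply: le_trans (_ : `|b - b'| * `|b + b'| <= _).
  by rewrite expr2 ler_wpM2l.
by rewrite (unit_circle_sub_mulr e e') mulrC ler_wpM2r.
Qed.

End UnitCircle.

Section CircleStrip.
Variables (R : realType) (eta : R).
Hypothesis eta_gt0 : 0 < eta.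
Implicit Types (S : set (C3 R)) (f g : C3 R -> R).

Lemma coverable_octant l S f g : 0 <= l ->
  (forall y, S y -> f y ^+ 2 + g y ^+ 2 = 1) ->
  (forall y y', S y -> S y' -> 0 <= g y * g y') ->
  (forall y y', S y -> S y' ->
     dvis y y' ^+ 2 <= (`|f y - f y'| + `|g y - g y'|) / 2) ->
  (forall y y', S y -> S y' -> `|f y - f y'| <= l) ->
  coverable eta [set y | S y /\ `|f y| <= `|g y|] (2 * l).
Proof.
move=> l0 circ sign_g d_le osc_f.
apply: (coverable_slices (f := f)) => // [y y' [Sy fg] [Sy' fg']|y y' [Sy _] [Sy' _]].
  apply: le_trans (d_le _ _ Sy Sy') _.
  by have := unit_circle_steep (circ _ Sy) (circ _ Sy') fg fg' (sign_g _ _ Sy Sy'); lra.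
exact: osc_f.
Qed.

(* In a quadrant both coordinates oscillate by at most [sqrt (2 L)], and
   each of its two octants is steep for one of them. *)
Lemma coverable_quadrant L S f g : 0 <= L ->
  (forall y, S y -> f y ^+ 2 + g y ^+ 2 = 1) ->
  (forall y y', S y -> S y' -> 0 <= f y * f y') ->
  (forall y y', S y -> S y' -> 0 <= g y * g y') ->
  (forall y y', S y -> S y' ->
     dvis y y' ^+ 2 <= (`|f y - f y'| + `|g y - g y'|) / 2) ->
  (forall y y', S y -> S y' -> `|f y - f y'| <= L) ->
  coverable eta S (4 * Num.sqrt (2 * L)).
Proof.
move=> L0 circ sign_f sign_g d_le osc_f.
set l := Num.sqrt (2 * L).
have osc_f_l y y' : S y -> S y' -> `|f y - f y'| <= l.
  move=> Sy Sy'; rewrite -sqrtr_sqr; apply: ler_wsqrtr; rewrite -real_normK ?num_real //.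
  have := osc_f _ _ Sy Sy'; have := normr_ge0 (f y - f y').
  have : `|f y - f y'| <= 2.
    apply: le_trans (ler_normB _ _) _.
    by have := unit_circle_norm_le1 (circ _ Sy); have := unit_circle_norm_le1 (circ _ Sy'); lra.
  nra.
have osc_g_l y y' : S y -> S y' -> `|g y - g y'| <= l.
  move=> Sy Sy'; rewrite -sqrtr_sqr; apply: ler_wsqrtr.
  apply: le_trans (unit_circle_sqr_sub_le (circ _ Sy) (circ _ Sy') (sign_g _ _ Sy Sy')) _.
  by rewrite ler_pM2l // osc_f.
have circ' y : S y -> g y ^+ 2 + f y ^+ 2 = 1 by rewrite addrC; apply: circ.
have d_le' y y' : S y -> S y' -> dvis y y' ^+ 2 <= (`|g y - g y'| + `|f y - f y'|) / 2.
  by rewrite addrC; apply: d_le.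
have -> : 4 * l = 2 * l + 2 * l by ring.
apply: (coverable_subset _ (coverable_setU
  (coverable_octant (sqrtr_ge0 _) circ sign_g d_le osc_f_l)
  (coverable_octant (sqrtr_ge0 _) circ' sign_f d_le' osc_g_l))).
by move=> y Sy; case: (lerP `|f y| `|g y|) => h; [left | right; split; rewrite ?ltW].
Qed.

Lemma coverable_unit_circle_strip L S (u : C3 R -> R[i]) : 0 <= L ->
  (forall y, S y -> cabs (u y) = 1) ->
  (forall y y', S y -> S y' -> dvis y y' ^+ 2 <= cabs (u y - u y') / 2) ->
  (forall y y', S y -> S y' -> `|complex.Re (u y) - complex.Re (u y')| <= L) ->
  coverable eta S (16 * Num.sqrt (2 * L)).
Proof.
move=> L0 unit_u d_le strip.
pose a y := complex.Re (u y); pose b y := complex.Im (u y).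
pose Q (sa sb : bool) := [set y | S y /\ (0 <= a y) = sa /\ (0 <= b y) = sb].
have coverQ sa sb : coverable eta (Q sa sb) (4 * Num.sqrt (2 * L)).
  apply: (coverable_quadrant (f := a) (g := b)) => //.
  - by move=> y [Sy _]; apply: cabs_unit_Re_Im; apply: unit_u.
  - by move=> y y' [_ [ha _]] [_ [ha' _]]; apply: same_sign_mulr_ge0; rewrite ha ha'.
  - by move=> y y' [_ [_ hb]] [_ [_ hb']]; apply: same_sign_mulr_ge0; rewrite hb hb'.
  - move=> y y' [Sy _] [Sy' _]; apply: le_trans (d_le _ _ Sy Sy') _.
    rewrite ler_pM2r ?invr_gt0 //.
    by have := cabs_le_Re_Im (u y - u y'); rewrite Re_sub Im_sub.
  - by move=> y y' [Sy _] [Sy' _]; apply: strip.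
have -> : 16 * Num.sqrt (2 * L) = 4 * Num.sqrt (2 * L) + 4 * Num.sqrt (2 * L) +
  4 * Num.sqrt (2 * L) + 4 * Num.sqrt (2 * L) by ring.
apply: (coverable_subset _ (coverable_setU (coverable_setU (coverable_setU
  (coverQ true true) (coverQ true false)) (coverQ false true)) (coverQ false false))).
move=> y Sy; rewrite /Q /=.
by case: (0 <= a y); case: (0 <= b y); [left; left; left|left; left; right|left; right|right].
Qed.

End CircleStrip.

Section HermitianForm.
Variable R : realType.
Implicit Types u v w : C3 R.

Definition dot12 u v : R[i] := c1 u * (c1 v)^* + c2 u * (c2 v)^*.
Definition cross12 u v : R[i] := c2 u * c1 v - c1 u * c2 v.
Definition sqnorm12 u : R := cabs (c1 u) ^+ 2 + cabs (c2 u) ^+ 2.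

Lemma dot12_self u : dot12 u u = (sqnorm12 u)%:C.
Proof. by rewrite /dot12 !mulcJ -rmorphD. Qed.

Lemma lagrange12 u v w :
  dot12 w w * dot12 u v = dot12 u w * (dot12 v w)^* + cross12 u w * (cross12 v w)^*.
Proof. by rewrite /dot12 /cross12 !(rmorphD, rmorphB, rmorphM) /= !conjCK; ring. Qed.

Lemma lagrange12_norm u w :
  sqnorm12 w * sqnorm12 u = cabs (dot12 u w) ^+ 2 + cabs (cross12 u w) ^+ 2.
Proof.
by apply: complexI; rewrite rmorphM /= -!dot12_self lagrange12 !mulcJ -rmorphD.
Qed.

Lemma cabs_dot12_sqr_le u w : cabs (dot12 u w) ^+ 2 <= sqnorm12 w * sqnorm12 u.
Proof. by rewrite lagrange12_norm lerDl sqr_ge0. Qed.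

Lemma hermE u v : herm u v = c0 u * (c0 v)^* - dot12 u v.
Proof. by rewrite /herm /dot12 opprD addrA. Qed.

Lemma qformE u : qform u = cabs (c0 u) ^+ 2 - sqnorm12 u.
Proof. by rewrite /qform hermE mulcJ dot12_self -rmorphB. Qed.

Lemma neg_qform_le_sqnorm12 u : - qform u <= sqnorm12 u.
Proof. by rewrite qformE opprB gerBl sqr_ge0. Qed.

Lemma sqnorm12_gt0 u : qform u < 0 -> 0 < sqnorm12 u.
Proof. by move=> u_neg; apply: lt_le_trans (neg_qform_le_sqnorm12 u); rewrite oppr_gt0. Qed.

Lemma neg_qform_ratio_le u : qform u < 0 -> - qform u / (4 * sqnorm12 u) <= 1 / 4.
Proof.
move=> /sqnorm12_gt0 S_gt0.
by rewrite ler_pdivrMr ?mulr_gt0 // mul1r mulKf ?pnatr_eq0 ?neg_qform_le_sqnorm12.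
Qed.

Lemma S3_c0_neq0 u : S3 u -> c0 u != 0.
Proof.
case=> u_neq0 /eqP; rewrite qformE; apply: contraTneq => u00.
have cabs0 : cabs (0 : R[i]) = 0 by apply/eqP; rewrite cabs_eq0.
rewrite u00 cabs0 expr2 mul0r sub0r oppr_eq0 paddr_eq0 ?sqr_ge0 // !sqrf_eq0 !cabs_eq0.
apply/negP => /andP [/eqP u10 /eqP u20]; apply: u_neq0.
by case: u u00 u10 u20 => [[u0 u1] u2]; rewrite /c0 /c1 /c2 /= => -> -> ->.
Qed.

Lemma cabs_c0_gt0 u : S3 u -> 0 < cabs (c0 u).
Proof. by rewrite cabs_gt0; apply: S3_c0_neq0. Qed.

Lemma enorm_S3 u : qform u = 0 -> enorm u = Num.sqrt 2 * cabs (c0 u).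
Proof.
rewrite qformE => /eqP; rewrite subr_eq0 => /eqP c0_sqr; rewrite /enorm.
have -> : cabs (c0 u) ^+ 2 + cabs (c1 u) ^+ 2 + cabs (c2 u) ^+ 2 = 2 * cabs (c0 u) ^+ 2.
  by rewrite -addrA -/(sqnorm12 u) -c0_sqr; ring.
by rewrite sqrtrM ?ler0n // sqrtr_sqr ger0_norm ?cabs_ge0.
Qed.

Lemma dvis_sqr u v : dvis u v ^+ 2 = cabs (herm u v) / (enorm u * enorm v).
Proof. by rewrite sqr_sqrtr // divr_ge0 ?cabs_ge0 ?mulr_ge0 ?sqrtr_ge0. Qed.

Lemma dvis_S3_sqr u v : S3 u -> S3 v ->
  dvis u v ^+ 2 = cabs (herm u v) / (2 * (cabs (c0 u) * cabs (c0 v))).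
Proof.
move=> [_ /enorm_S3 nu] [_ /enorm_S3 nv].
by rewrite dvis_sqr nu nv mulrACA -expr2 sqr_sqrtr ?ler0n.
Qed.

End HermitianForm.

Section ChainGeometry.
Variables (R : realType) (w : C3 R).
Hypothesis w_neg : qform w < 0.
Implicit Types x y : C3 R.

Let Q := - qform w.
Let S := sqnorm12 w.
Let sQ : R := Num.sqrt Q.

Let Q_gt0 : 0 < Q. Proof. by rewrite oppr_gt0. Qed.
Let c0w_sqr : cabs (c0 w) ^+ 2 = S - Q. Proof. by rewrite /Q qformE opprB subKr. Qed.
Let Q_le_S : Q <= S. Proof. exact: neg_qform_le_sqnorm12. Qed.
Let S_gt0 : 0 < S. Proof. exact: sqnorm12_gt0. Qed.
Let sQ_gt0 : 0 < sQ. Proof. by rewrite sqrtr_gt0. Qed.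
Let sQ_sqr : sQ ^+ 2 = Q. Proof. by rewrite sqr_sqrtr // ltW. Qed.

(* [chain_coord] identifies the chain [L_w] with the unit circle. *)
Definition chain_coord y : R[i] := (cross12 y w / (sQ%:C * c0 y))^*.

Lemma dot12_chain y : herm y w = 0 -> dot12 y w = c0 y * (c0 w)^*.
Proof. by move/eqP; rewrite hermE subr_eq0 => /eqP. Qed.

Lemma cabs_cross12_chain y : chain w y -> cabs (cross12 y w) = sQ * cabs (c0 y).
Proof.
move=> [[_ /eqP]]; rewrite qformE subr_eq0 => /eqP c0y_sqr /dot12_chain dot_yw.
apply/eqP; rewrite -(@eqrXn2 _ 2) ?mulr_ge0 ?cabs_ge0 ?sqrtr_ge0 //; apply/eqP.
have := lagrange12_norm y w; rewrite dot_yw cabsM cabsJ exprMn -c0y_sqr c0w_sqr.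
by rewrite exprMn sQ_sqr -/S; lra.
Qed.

Lemma cross12_chain y : S3 y -> cross12 y w = sQ%:C * c0 y * (chain_coord y)^*.
Proof.
move=> Sy; rewrite /chain_coord conjCK mulrC divfK // mulf_neq0 ?S3_c0_neq0 //.
by rewrite fmorph_eq0 gt_eqF.
Qed.

Lemma cabs_chain_coord y : chain w y -> cabs (chain_coord y) = 1.
Proof.
move=> chy; have [Sy _] := chy; have y0_gt0 := cabs_c0_gt0 Sy.
rewrite /chain_coord cabsJ cabsM cabsV cabsM cabsR gtr0_norm // cabs_cross12_chain //.
by rewrite divff // gt_eqF // mulr_gt0.
Qed.

(* Seen from [x], the chain is the circle of radius [|chain_radius x|] around
   [chain_center x]: see [dvis_sqr_chain]. *)
Definition chain_center x : R[i] :=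
  (S%:C * c0 x - dot12 x w * c0 w) / (2 * S * cabs (c0 x))%:C.
Definition chain_radius x : R[i] := sQ%:C * cross12 x w / (2 * S * cabs (c0 x))%:C.

Lemma herm_chain x y : chain w y -> S%:C * herm x y =
  (c0 y)^* * (S%:C * c0 x - dot12 x w * c0 w - sQ%:C * cross12 x w * chain_coord y).
Proof.
move=> [Sy hyw]; have lag := lagrange12 x y w; rewrite dot12_self in lag.
rewrite hermE mulrBr lag (dot12_chain hyw) (cross12_chain Sy).
by rewrite !rmorphM /= !conjCK conj_realC; ring.
Qed.

Lemma dvis_sqr_chain x y : S3 x -> chain w y ->
  dvis x y ^+ 2 = cabs (chain_center x - chain_radius x * chain_coord y).
Proof.
move=> Sx chy; have [Sy _] := chy.
have x0_gt0 := cabs_c0_gt0 Sx; have y0_gt0 := cabs_c0_gt0 Sy.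
set P := S%:C * c0 x - dot12 x w * c0 w; set E := 2 * S * cabs (c0 x).
have -> : chain_center x - chain_radius x * chain_coord y =
    (P - sQ%:C * cross12 x w * chain_coord y) / E%:C.
  by rewrite mulrBl /chain_center /chain_radius; congr (_ - _); apply: mulrAC.
have e : S * cabs (herm x y) = cabs (c0 y) * cabs (P - sQ%:C * cross12 x w * chain_coord y).
  by rewrite -[S]ger0_norm ?(ltW S_gt0) // -cabsR -cabsM (herm_chain x chy) cabsM cabsJ.
rewrite (dvis_S3_sqr Sx Sy) cabsM cabsV cabsR gtr0_norm ?mulr_gt0 //.
have -> : cabs (herm x y) = cabs (c0 y) * cabs (P - sQ%:C * cross12 x w * chain_coord y) / S.
  by rewrite -e [S * _]mulrC mulfK ?gt_eqF.
by rewrite /E; field; rewrite !gt_eqF.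
Qed.

Lemma dvis_sqr_chain_le y y' : chain w y -> chain w y' ->
  dvis y y' ^+ 2 <= cabs (chain_coord y - chain_coord y') / 2.
Proof.
move=> chy chy'; have [Sy hyw] := chy; have y0_gt0 := cabs_c0_gt0 Sy.
set E := (2 * S * cabs (c0 y))%:C.
have center_y : chain_center y = Q%:C * c0 y / E.
  rewrite /chain_center (dot12_chain hyw) -mulrA [(c0 w)^* * _]mulrC mulcJ c0w_sqr.
  by rewrite [c0 y * _]mulrC -mulrBl -rmorphB /= opprB addrC subrK.
have radius_y : chain_radius y = chain_center y * (chain_coord y)^*.
  rewrite center_y /chain_radius (cross12_chain Sy) !mulrA -rmorphM /= -expr2 sQ_sqr.
  by rewrite mulrAC.
have unit_y : (chain_coord y)^* * chain_coord y = 1.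
  by rewrite mulrC mulcJ cabs_chain_coord // expr1n rmorph1.
rewrite (dvis_sqr_chain Sy chy') radius_y -{1}[chain_center y]mulr1 -unit_y.
rewrite mulrA -mulrBr center_y !cabsM cabsV !cabsR cabsJ cabs_chain_coord // mulr1.
rewrite /E !gtr0_norm ?mulr_gt0 //.
have -> : Q * cabs (c0 y) / (2 * S * cabs (c0 y)) = Q / S / 2 by field; rewrite !gt_eqF.
rewrite mulrC; apply: ler_wpM2l; first exact: cabs_ge0.
rewrite -[leRHS]mul1r; apply: ler_wpM2r; first by rewrite invr_ge0 ler0n.
by rewrite ler_pdivrMr // mul1r.
Qed.

Lemma chain_center_ge x : S3 x -> Q / (4 * S) <= cabs (chain_center x).
Proof.
move=> Sx; have x0_gt0 := cabs_c0_gt0 Sx.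
have [_ /eqP] := Sx; rewrite qformE subr_eq0 => /eqP x0_sqr.
have dot_sqr : cabs (dot12 x w) ^+ 2 <= S * cabs (c0 x) ^+ 2.
  by rewrite x0_sqr; apply: cabs_dot12_sqr_le.
have dot_w0 : cabs (dot12 x w) * cabs (c0 w) <= cabs (c0 x) * (S - Q / 2).
  have SQ_ge0 : 0 <= S - Q by rewrite subr_ge0.
  have rhs_ge0 : 0 <= cabs (c0 x) * (S - Q / 2).
    by rewrite mulr_ge0 ?cabs_ge0 //; have := Q_gt0; lra.
  rewrite -(ger0_norm rhs_ge0) -(ger0_norm (mulr_ge0 (cabs_ge0 _) (cabs_ge0 _))).
  rewrite -sqr_le_norm !exprMn c0w_sqr.
  have := ler_wpM2r SQ_ge0 dot_sqr; have := sqr_ge0 (cabs (c0 x) * Q); lra.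
have P_ge : Q / 2 * cabs (c0 x) <= cabs (S%:C * c0 x - dot12 x w * c0 w).
  apply: le_trans (cabsB _ _); rewrite !cabsM cabsR gtr0_norm //; lra.
rewrite /chain_center cabsM cabsV cabsR gtr0_norm ?mulr_gt0 // ler_pdivlMr ?mulr_gt0 //.
have -> : Q / (4 * S) * (2 * S * cabs (c0 x)) = Q / 2 * cabs (c0 x).
  by field; rewrite gt_eqF.
exact: P_ge.
Qed.

End ChainGeometry.

Section Annulus.
Variable R : realType.
Implicit Types (p q v z : R[i]) (r d s t : R).

Lemma cabs_subc_sqr p v :
  cabs (p - v) ^+ 2 = cabs p ^+ 2 + cabs v ^+ 2 - 2 * complex.Re (p^* * v).
Proof. by rewrite !cabs_sqr; case: p => a b; case: v => c e /=; ring. Qed.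

(* On the unit circle [|p - q z|^2 = |p|^2 + |q|^2 - 2 Re (p^* q z)]. *)
Lemma Re_sub_le_annulus p q z (z' : R[i]) s t : cabs z = 1 -> cabs z' = 1 -> 0 <= s ->
  s <= cabs (p - q * z) <= t -> s <= cabs (p - q * z') <= t ->
  `|complex.Re (p^* * q * z) - complex.Re (p^* * q * z')| <= (t ^+ 2 - s ^+ 2) / 2.
Proof.
move=> z1 z'1 s0 /andP [s_le le_t] /andP [s_le' le_t'].
have expand zz : cabs zz = 1 ->
    cabs (p - q * zz) ^+ 2 = cabs p ^+ 2 + cabs q ^+ 2 - 2 * complex.Re (p^* * q * zz).
  by move=> zz1; rewrite cabs_subc_sqr cabsM zz1 mulr1 mulrA.
have sqr_mono (a b : R) : 0 <= a -> a <= b -> a ^+ 2 <= b ^+ 2.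
  by move=> a0 ab; rewrite ler_sqr ?nnegrE // (le_trans a0 ab).
have := sqr_mono _ _ s0 s_le; have := sqr_mono _ _ s0 s_le'.
have := sqr_mono _ _ (le_trans s0 s_le) le_t; have := sqr_mono _ _ (le_trans s0 s_le') le_t'.
rewrite !expand // => h1 h2 h3 h4; rewrite ler_norml; apply/andP; split; lra.
Qed.

Lemma pow4_sub_le r d : 0 <= d -> d <= r -> r <= 1 -> (r + d) ^+ 4 - r ^+ 4 <= 15 * d.
Proof.
move=> d0 dr r1.
have -> : (r + d) ^+ 4 - r ^+ 4 =
  d * (4 * r ^+ 3 + 6 * (r ^+ 2 * d) + 4 * (r * d ^+ 2) + d ^+ 3) by ring.
rewrite mulrC ler_wpM2r //.
have r0 : 0 <= r by lra.
have r3 : r ^+ 3 <= 1 by rewrite exprn_ile1.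
have d3 : d ^+ 3 <= 1 by rewrite exprn_ile1 //; lra.
have r2d : r ^+ 2 * d <= 1 by rewrite mulr_ile1 ?exprn_ge0 ?exprn_ile1 //; lra.
have rd2 : r * d ^+ 2 <= 1 by rewrite mulr_ile1 ?exprn_ge0 ?exprn_ile1 //; lra.
lra.
Qed.

End Annulus.

Lemma chain_annulus_unit_circle_strip (R : realType) (w x : C3 R) (k r d : R) :
  qform w < 0 -> S3 x -> 0 < k -> k <= - qform w / (4 * sqnorm12 w) ->
  0 < d -> d <= r -> r <= 1 -> (r + d) ^+ 2 <= k / 2 ->
  exists u : C3 R -> R[i],
  [/\ forall y, (chain w `&` annulus x r d) y -> cabs (u y) = 1,
      forall y y', (chain w `&` annulus x r d) y -> (chain w `&` annulus x r d) y' ->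
        dvis y y' ^+ 2 <= cabs (u y - u y') / 2 &
      forall y y', (chain w `&` annulus x r d) y -> (chain w `&` annulus x r d) y' ->
        `|complex.Re (u y) - complex.Re (u y')| <= 15 * d / k ^+ 2].
Proof.
move=> w_neg Sx k_gt0 k_le d_gt0 dr r1 rd_le.
set A := chain w `&` annulus x r d.
set p := chain_center w x; set q := chain_radius w x; set m := p^* * q.
have inA y : A y -> [/\ chain w y, cabs (chain_coord w y) = 1 &
    r ^+ 2 <= cabs (p - q * chain_coord w y) <= (r + d) ^+ 2].
  move=> [chy [_ /andP [r_le le_rd]]]; split => //; first exact: cabs_chain_coord.
  have r_ge0 : 0 <= r by lra.
  have rd_ge0 : 0 <= r + d by lra.
  by rewrite -dvis_sqr_chain // !ler_sqr ?nnegrE ?sqrtr_ge0 // r_le le_rd.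
have m_ge y : A y -> k ^+ 2 / 2 <= cabs m.
  move=> /inA [_ unit_y /andP [_ le_rd]].
  have p_ge : k <= cabs p := le_trans k_le (chain_center_ge w_neg Sx).
  have q_ge : k / 2 <= cabs q.
    by have := cabsB p (q * chain_coord w y); rewrite cabsM unit_y mulr1; lra.
  rewrite /m cabsM cabsJ (_ : k ^+ 2 / 2 = k * (k / 2)); last by ring.
  by apply: ler_pM; lra.
have m_gt0 y : A y -> 0 < cabs m.
  by move=> /m_ge; apply: lt_le_trans; rewrite divr_gt0 ?exprn_gt0.
exists (fun y => (cabs m)^-1%:C * (m * chain_coord w y)); split.
- move=> y Ay; have [_ unit_y _] := inA _ Ay.
  rewrite cabsM [cabs (m * _)]cabsM cabsR unit_y mulr1 ger0_norm ?invr_ge0 ?cabs_ge0 //.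
  by rewrite mulVf // gt_eqF // (m_gt0 _ Ay).
- move=> y y' Ay Ay'; have [chy _ _] := inA _ Ay; have [chy' _ _] := inA _ Ay'.
  rewrite -mulrBr -mulrBr cabsM [cabs (m * _)]cabsM cabsR ger0_norm ?invr_ge0 ?cabs_ge0 //.
  by rewrite mulrA mulVf ?gt_eqF ?(m_gt0 _ Ay) // mul1r; apply: dvis_sqr_chain_le.
move=> y y' Ay Ay'; have [_ unit_y bd_y] := inA _ Ay; have [_ unit_y' bd_y'] := inA _ Ay'.
have := Re_sub_le_annulus unit_y unit_y' (sqr_ge0 r) bd_y bd_y'.
rewrite -/m -!exprM /= => Re_le.
rewrite !Re_realC_mul -mulrBr normrM ger0_norm ?invr_ge0 ?cabs_ge0 //.
rewrite mulrC ler_pdivrMr ?(m_gt0 _ Ay) //.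
have L_ge0 : 0 <= 15 * d / k ^+ 2 by rewrite divr_ge0 ?sqr_ge0 // mulr_ge0 // ltW.
have L_eq : 15 * d / k ^+ 2 * (k ^+ 2 / 2) = 15 * d / 2 by field; rewrite gt_eqF.
have := ler_wpM2l L_ge0 (m_ge _ Ay); have := pow4_sub_le (ltW d_gt0) dr r1.
lra.
Qed.

Lemma eta_L_annulus_le (R : realType) (w x : C3 R) (k r d : R) :
  qform w < 0 -> S3 x -> 0 < k -> k <= - qform w / (4 * sqnorm12 w) ->
  0 < d -> d <= r -> r <= 1 -> (r + d) ^+ 2 <= k / 2 ->
  (eta_L w (annulus x r d) <= (16 * Num.sqrt (2 * (15 * d / k ^+ 2)))%:E)%E.
Proof.
move=> w_neg Sx k_gt0 k_le d_gt0 dr r1 rd_le.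
have [u [unit_u d_le strip]] :=
  chain_annulus_unit_circle_strip w_neg Sx k_gt0 k_le d_gt0 dr r1 rd_le.
have L_ge0 : 0 <= 15 * d / k ^+ 2 by rewrite divr_ge0 ?sqr_ge0 // mulr_ge0 // ltW.
apply: ge_ereal_sup => _ [eta eta_gt0 <-]; apply: coverable_haus2_approx.
exact: (coverable_unit_circle_strip eta_gt0 L_ge0 unit_u d_le strip).
Qed.

Section UniformConstants.
Variable R : realType.
Let R6 := ((R * R) * (R * R) * (R * R))%type.

Let continuous_fst (U V : topologicalType) : continuous (@fst U V).
Proof. by move=> ?; apply: cvg_fst. Qed.
Let continuous_snd (U V : topologicalType) : continuous (@snd U V).
Proof. by move=> ?; apply: cvg_snd. Qed.
Let continuous_compf (U V W : topologicalType) (f : U -> V) (g : V -> W) :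
  continuous f -> continuous g -> continuous (fun x => g (f x)).
Proof. by move=> cf cg x; apply: continuous_comp (cf x) (cg _). Qed.
Let continuous_addf (U : topologicalType) (f g : U -> R) :
  continuous f -> continuous g -> continuous (fun x => f x + g x).
Proof. by move=> cf cg x; apply: continuousD (cf x) (cg x). Qed.
Let continuous_subf (U : topologicalType) (f g : U -> R) :
  continuous f -> continuous g -> continuous (fun x => f x - g x).
Proof. by move=> cf cg x; apply: continuousB (cf x) (cg x). Qed.

Definition sqnormR2 (z : R * R) : R := z.1 ^+ 2 + z.2 ^+ 2.
Definition sqnorm12_R6 (p : R6) : R := sqnormR2 p.1.2 + sqnormR2 p.2.
Definition neg_qform_R6 (p : R6) : R := sqnorm12_R6 p - sqnormR2 p.1.1.

Lemma sqnorm12_realify w : sqnorm12 w = sqnorm12_R6 (realify w).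
Proof. by rewrite /sqnorm12 !cabs_sqr. Qed.

Lemma neg_qform_realify w : - qform w = neg_qform_R6 (realify w).
Proof. by rewrite qformE opprB sqnorm12_realify /neg_qform_R6 cabs_sqr. Qed.

Lemma continuous_sqnormR2 : continuous sqnormR2.
Proof.
apply: continuous_addf.
  exact: continuous_compf (@continuous_fst R R) (@exprn_continuous R 2).
exact: continuous_compf (@continuous_snd R R) (@exprn_continuous R 2).
Qed.

Lemma continuous_sqnorm12_R6 : continuous sqnorm12_R6.
Proof.
apply: continuous_addf; apply: continuous_compf continuous_sqnormR2; last exact: continuous_snd.
exact: continuous_compf (@continuous_fst _ _) (@continuous_snd _ _).
Qed.

Lemma continuous_neg_qform_R6 : continuous neg_qform_R6.
Proof.
apply: continuous_subf continuous_sqnorm12_R6 _.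
apply: continuous_compf continuous_sqnormR2.
exact: continuous_compf (@continuous_fst _ _) (@continuous_fst _ _).
Qed.

Lemma compact_neg_qform_ratio_lb (K : set (C3 R)) : compact (@realify R @` K) ->
  (forall w, K w -> qform w < 0) ->
  exists2 k : R, 0 < k & forall w, K w -> k <= - qform w / (4 * sqnorm12 w).
Proof.
move=> cK K_neg.
have [[w0 Kw0]|K0] := pselect (exists w, K w); last first.
  by exists 1 => [|w Kw]; [exact: ltr01 | exfalso; apply: K0; exists w].
have K6_neq0 : @realify R @` K !=set0 by exists (realify w0), w0.
have [pm pmK Q_min] :=
  compact_EVT_min K6_neq0 cK (continuous_subspaceT continuous_neg_qform_R6).
have [pM pMK S_max] :=
  compact_EVT_max K6_neq0 cK (continuous_subspaceT continuous_sqnorm12_R6).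
move: pmK pMK Q_min S_max; rewrite !inE => -[wm Kwm <-] [wM KwM <-] Q_min S_max.
have Q_ge w : K w -> - qform wm <= - qform w.
  by move=> Kw; rewrite !neg_qform_realify; apply: Q_min; rewrite inE; exists w.
have S_le w : K w -> sqnorm12 w <= sqnorm12 wM.
  by move=> Kw; rewrite !sqnorm12_realify; apply: S_max; rewrite inE; exists w.
have Q_gt0 w : K w -> 0 < - qform w by move=> /K_neg; rewrite oppr_gt0.
have S_gt0 w : K w -> 0 < sqnorm12 w by move=> /K_neg /sqnorm12_gt0.
exists (- qform wm / (4 * sqnorm12 wM)); first by rewrite divr_gt0 ?mulr_gt0 ?Q_gt0 ?S_gt0.
move=> w Kw; rewrite ler_pdivrMr ?mulr_gt0 ?S_gt0 // mulrAC ler_pdivlMr ?mulr_gt0 ?S_gt0 //.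
apply: ler_pM.
- exact: ltW (Q_gt0 _ Kwm).
- by rewrite mulr_ge0 ?ler0n // ltW ?S_gt0.
- exact: Q_ge.
- by apply: ler_wpM2l; [rewrite ler0n | exact: S_le].
Qed.

End UniformConstants.

Unset Implicit Arguments.

Theorem lemma5p20 (R : realType) (K : set (C3 R)) :
  compact (@realify R @` K) ->
  (forall w, K w -> w <> C3_zero R /\ qform w < 0) ->
  exists r0 : R, exists C : R, 0 < r0 /\
    forall (x w : C3 R) (r delta : R),
      S3 x -> K w -> 0 < delta -> delta <= r -> r <= r0 ->
      (eta_L w (annulus x r delta) <= (C * Num.sqrt delta)%:E)%E.
Proof.
move=> cK K_neg; have {}K_neg w : K w -> qform w < 0 by move=> /K_neg [].
have [k k_gt0 k_le] := compact_neg_qform_ratio_lb cK K_neg.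
pose r0 := Num.sqrt (k / 8).
have r0_sqr : r0 ^+ 2 = k / 8 by rewrite sqr_sqrtr // divr_ge0 // ltW.
exists r0, (16 * Num.sqrt (30 / k ^+ 2)); split; first by rewrite sqrtr_gt0 divr_gt0.
move=> x w r d Sx Kw d_gt0 dr r_le.
have k_le4 := le_trans (k_le _ Kw) (neg_qform_ratio_le (K_neg _ Kw)).
have r_le1 : r <= 1.
  by apply: le_trans r_le _; rewrite -sqrtr1; apply: ler_wsqrtr; lra.
have rd_le : (r + d) ^+ 2 <= k / 2.
  have : (r + d) ^+ 2 <= (2 * r0) ^+ 2.
    by rewrite ler_sqr ?nnegrE ?mulr_ge0 ?sqrtr_ge0; lra.
  by rewrite exprMn r0_sqr; lra.
have -> : 16 * Num.sqrt (30 / k ^+ 2) * Num.sqrt d = 16 * Num.sqrt (2 * (15 * d / k ^+ 2)).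
  rewrite -mulrA -sqrtrM ?divr_ge0 ?sqr_ge0 //; congr (_ * Num.sqrt _).
  by field; rewrite gt_eqF.
exact: eta_L_annulus_le (K_neg _ Kw) Sx k_gt0 (k_le _ Kw) d_gt0 dr r_le1 rd_le.
Qed.
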